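(* Let $A$ be an associative algebra, $M$ an $A$-bimodule and $\{ T_\alpha: M \to A \}_{\alpha \in \Omega}$ an $\mathcal{O}$-operator family. Then $(M, \{ \prec_\alpha, \succ_\alpha \}_{\alpha \in \Omega})$ is a dendriform family algebra, where $u \prec_\alpha v=u \cdot T_\alpha(v)$ and $u \succ_\alpha v = T_\alpha(u) \cdot v$. Moreover, if $(\phi, \psi)$ is a morphism of $\mathcal{O}$-operator families from $\{ T_\alpha : M \to A \}$ to $\{ T'_\alpha : M' \to A' \}$, then $\psi: M \to M'$ is a morphism between the induced dendriform family algebras.
   Context: $\Omega$ is a semigroup. An $\mathcal{O}$-operator family is a collection of linear maps $T_\alpha:M\to A$ with $T_\alpha(u) \cdot T_\beta(v) = T_{\alpha\beta}(T_\alpha(u) \cdot v + u \cdot T_\beta(v))$. A morphism of $\mathcal{O}$-operator families from $\{T_\alpha:M\to A\}$ to $\{T'_\alpha:M'\to A'\}$ is a pair $(\phi,\psi)$, $\phi:A\to A'$ an algebra homomorphism and $\psi:M\to M'$ linear, with $\psi (a \cdot u) = \phi (a) \cdot' \psi (u)$, $\psi (u \cdot a) = \psi (u) \cdot' \phi (a)$, $\phi \circ T_\alpha = T'_\alpha \circ \psi$ for all $\alpha$. A dendriform family algebra is a vector space $D$ with bilinear maps $\{\prec_\alpha,\succ_\alpha\}_{\alpha\in\Omega}$ satisfying $(x \prec_\alpha y) \prec_\beta z = x \prec_{\alpha \beta} (y \prec_\beta z + y \succ_\alpha z)$, $(x \succ_\alpha y) \prec_\beta z = x \succ_\alpha (y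 \prec_\beta z)$, $(x \prec_\beta y + x \succ_\alpha y) \succ_{\alpha \beta} z = x \succ_\alpha (y \succ_\beta z)$; a morphism of such is a linear map preserving all $\prec_\alpha,\succ_\alpha$. *)

From HB Require Import structures.
From mathcomp Require Import all_boot all_order all_algebra.
Set Implicit Arguments. Unset Strict Implicit. Unset Printing Implicit Defensive.
Import GRing.Theory.
Local Open Scope ring_scope.

Definition is_semigroup (Om : Type) (op : Om -> Om -> Om) : Prop :=
  forall a b c, op (op a b) c = op a (op b c).

Definition bilinear_op (K : fieldType) (U V W : lmodType K) (f : U -> V -> W) : Prop :=
  (forall (c : K) (u1 u2 : U) (v : V), f (c *: u1 + u2) v = c *: f u1 v + f u2 v) /\
  (forall (c : K) (u : U) (v1 v2 : V), f u (c *: v1 + v2) = c *: f u v1 + f u v2).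

Definition is_assoc_algebra (K : fieldType) (A : lmodType K) (mul : A -> A -> A) : Prop :=
  bilinear_op mul /\ (forall a b c, mul (mul a b) c = mul a (mul b c)).

Definition is_bimodule (K : fieldType) (A : lmodType K) (mul : A -> A -> A)
    (M : lmodType K) (lact : A -> M -> M) (ract : M -> A -> M) : Prop :=
  [/\ bilinear_op lact, bilinear_op ract,
      (forall a b u, lact (mul a b) u = lact a (lact b u)),
      (forall u a b, ract (ract u a) b = ract u (mul a b)) &
      (forall a u b, ract (lact a u) b = lact a (ract u b))].

Definition is_O_operator_family (K : fieldType) (Om : Type) (op : Om -> Om -> Om)
    (A : lmodType K) (mul : A -> A -> A)
    (M : lmodType K) (lact : A -> M -> M) (ract : M -> A -> M)
    (T : Om -> {linear M -> A}) : Prop :=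
  forall (al be : Om) (u v : M),
    mul (T al u) (T be v) = T (op al be) (lact (T al u) v + ract u (T be v)).



Definition is_dendriform_family (K : fieldType) (Om : Type) (op : Om -> Om -> Om)
    (D : lmodType K) (prec succ : Om -> D -> D -> D) : Prop :=
  [/\ (forall al, bilinear_op (prec al)),
      (forall al, bilinear_op (succ al)),
      (forall al be x y z,
          prec be (prec al x y) z = prec (op al be) x (prec be y z + succ al y z)),
      (forall al be x y z,
          prec be (succ al x y) z = succ al x (prec be y z)) &
      (forall al be x y z,
          succ (op al be) (prec be x y + succ al x y) z = succ al x (succ be y z))].

Definition is_alg_hom (K : fieldType) (A : lmodType K) (mul : A -> A -> A)
    (A' : lmodType K) (mul' : A' -> A' -> A') (phi : {linear A -> A'}) : Prop :=
  forall a b, phi (mul a b) = mul' (phi a) (phi b).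

Definition is_O_operator_family_morphism (K : fieldType) (Om : Type)
    (A : lmodType K) (mul : A -> A -> A)
    (M : lmodType K) (lact : A -> M -> M) (ract : M -> A -> M)
    (T : Om -> {linear M -> A})
    (A' : lmodType K) (mul' : A' -> A' -> A')
    (M' : lmodType K) (lact' : A' -> M' -> M') (ract' : M' -> A' -> M')
    (T' : Om -> {linear M' -> A'})
    (phi : {linear A -> A'}) (psi : {linear M -> M'}) : Prop :=
  [/\ is_alg_hom mul mul' phi,
      (forall a u, psi (lact a u) = lact' (phi a) (psi u)),
      (forall u a, psi (ract u a) = ract' (psi u) (phi a)) &
      (forall al u, phi (T al u) = T' al (psi u))].

Definition is_dendriform_family_morphism (K : fieldType) (Om : Type)
    (D : lmodType K) (prec succ : Om -> D -> D -> D)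
    (D' : lmodType K) (prec' succ' : Om -> D' -> D' -> D')
    (psi : {linear D -> D'}) : Prop :=
  forall al x y, psi (prec al x y) = prec' al (psi x) (psi y) /\
                 psi (succ al x y) = succ' al (psi x) (psi y).

From HB Require Import structures.
From mathcomp Require Import all_boot all_order all_algebra.

Set Implicit Arguments.
Unset Strict Implicit.
Unset Printing Implicit Defensive.

Import GRing.Theory.
Local Open Scope ring_scope.

Section BilinearComp.

Variables (K : fieldType) (U V W : lmodType K).

Lemma bilinear_op_compl (X : lmodType K) (f : U -> V -> W) (g : {linear X -> U}) :
  bilinear_op f -> bilinear_op (fun x v => f (g x) v).
Proof. by case=> f1 f2; split=> *; rewrite ?linearP. Qed.

Lemma bilinear_op_compr (X : lmodType K) (f : U -> V -> W) (g : {linear X -> V}) :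
  bilinear_op f -> bilinear_op (fun u x => f u (g x)).
Proof. by case=> f1 f2; split=> *; rewrite ?linearP. Qed.

End BilinearComp.

Definition O_prec (K : fieldType) (Om : Type) (A M : lmodType K)
    (ract : M -> A -> M) (T : Om -> {linear M -> A}) (al : Om) (u v : M) : M :=
  ract u (T al v).

Definition O_succ (K : fieldType) (Om : Type) (A M : lmodType K)
    (lact : A -> M -> M) (T : Om -> {linear M -> A}) (al : Om) (u v : M) : M :=
  lact (T al u) v.

Section OOperatorFamily.

Variables (K : fieldType) (Om : Type) (op : Om -> Om -> Om).
Variables (A : lmodType K) (mul : A -> A -> A).
Variables (M : lmodType K) (lact : A -> M -> M) (ract : M -> A -> M).
Variable T : Om -> {linear M -> A}.

Lemma O_operator_family_dendriform :
  is_bimodule mul lact ract -> is_O_operator_family op mul lact ract T ->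
  is_dendriform_family op (O_prec ract T) (O_succ lact T).
Proof.
case=> lactB ractB lactM ractM lact_ract HT.
split=> [al|al|al be x y z|al be x y z|al be x y z].
- exact: bilinear_op_compr.
- exact: bilinear_op_compl.
- by rewrite /O_prec /O_succ ractM HT addrC.
- exact: lact_ract.
- by rewrite /O_prec /O_succ -lactM HT addrC.
Qed.

Lemma O_operator_family_morphism_dendriform (A' : lmodType K) (mul' : A' -> A' -> A')
    (M' : lmodType K) (lact' : A' -> M' -> M') (ract' : M' -> A' -> M')
    (T' : Om -> {linear M' -> A'}) (phi : {linear A -> A'}) (psi : {linear M -> M'}) :
  is_O_operator_family_morphism mul lact ract T mul' lact' ract' T' phi psi ->
  is_dendriform_family_morphism (O_prec ract T) (O_succ lact T)
    (O_prec ract' T') (O_succ lact' T') psi.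
Proof.
move=> [_ psi_lact psi_ract phiT] al x y.
by rewrite /O_prec /O_succ psi_ract psi_lact !phiT.
Qed.

End OOperatorFamily.

Theorem proposition2p16 (K : fieldType) (Om : Type) (op : Om -> Om -> Om)
    (Hop : is_semigroup op)
    (A : lmodType K) (mul : A -> A -> A) (HA : is_assoc_algebra mul)
    (M : lmodType K) (lact : A -> M -> M) (ract : M -> A -> M)
    (HM : is_bimodule mul lact ract)
    (T : Om -> {linear M -> A}) (HT : is_O_operator_family op mul lact ract T) :
  is_dendriform_family op (fun al u v => ract u (T al v)) (fun al u v => lact (T al u) v)
  /\
  (forall (A' : lmodType K) (mul' : A' -> A' -> A') (M' : lmodType K)
          (lact' : A' -> M' -> M') (ract' : M' -> A' -> M')
          (T' : Om -> {linear M' -> A'}),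
      is_assoc_algebra mul' -> is_bimodule mul' lact' ract' ->
      is_O_operator_family op mul' lact' ract' T' ->
      forall (phi : {linear A -> A'}) (psi : {linear M -> M'}),
      is_O_operator_family_morphism mul lact ract T mul' lact' ract' T' phi psi ->
      is_dendriform_family_morphism
        (fun al u v => ract u (T al v)) (fun al u v => lact (T al u) v)
        (fun al u v => ract' u (T' al v)) (fun al u v => lact' (T' al u) v) psi).
Proof.
split; first exact: O_operator_family_dendriform HM HT.
move=> A' mul' M' lact' ract' T' _ _ _ phi psi.
exact: O_operator_family_morphism_dendriform.
Qed.
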